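(* Let $f\ge0$ be integrable on $[-\pi,\pi]$ with $\int f>0$ and such that $\lim_{n\to\infty}\sigma_{n+1}^2(f)/\sigma_n^2(f)=1$, and let $p_n$ be the optimal polynomial for $f$. If $g$ is a nonnegative, bounded, measurable function on $[-\pi,\pi]$ that is continuous at $\lambda=0$, then $$\lim_{n\to\infty}\frac{\mathrm{Var}_{fg}(\widehat m_f)}{\sigma_n^2(f)}=g(0),\qquad \mathrm{Var}_{fg}(\widehat m_f):=\int_{-\pi}^{\pi}|p_n(e^{i\lambda})|^2f(\lambda)g(\lambda)\,d\lambda .$$
   Context: $\sigma_n^2(f)=\min_{q\in\mathcal{Q}_n(1)}\int_{-\pi}^{\pi}|q(e^{i\lambda})|^2f(\lambda)\,d\lambda$, with $\mathcal{Q}_n(1)$ the complex polynomials of degree at most $n$ satisfying $q(1)=1$; $p_n$ is the unique minimizer. $\mathrm{Var}_{fg}(\widehat m_f)$ is the variance, under spectral density $fg$, of the BLUE of the mean computed assuming spectral density $f$. *)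

From HB Require Import structures.
From mathcomp Require Import all_boot all_order all_algebra.
From mathcomp Require Import all_classical all_reals all_analysis.
From mathcomp Require Import complex.
Set Implicit Arguments. Unset Strict Implicit. Unset Printing Implicit Defensive.
Import Order.TTheory GRing.Theory Num.Theory.
Import numFieldNormedType.Exports.
Local Open Scope classical_set_scope.
Local Open Scope ring_scope.

Definition expi (R : realType) (x : R) : R[i] := Complex (cos x) (sin x).

Definition sqmod (R : realType) (z : R[i]) : R := (@complex.Re R z) ^+ 2 + (@complex.Im R z) ^+ 2.

(* Q_n(1): complex polynomials of degree at most n with q(1) = 1 *)
Definition Qn1 (R : realType) (n : nat) : set {poly R[i]} :=
  [set q : {poly R[i]} | (size q <= n.+1)%N /\ q.[1] = 1].

Definition wint (R : realType) (h : R -> R) (q : {poly R[i]}) : R :=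
  Rintegral (@lebesgue_measure R) `[(- pi)%R, pi]
    (fun x => sqmod (q.[expi x]) * h x).

(* sigma_n^2(f) = min over Q_n(1) of wint f q (here as an infimum; the min is attained) *)
Definition sigma2 (R : realType) (f : R -> R) (n : nat) : R :=
  inf [set wint f q | q in @Qn1 R n].

Definition optimal_poly (R : realType) (f : R -> R) (n : nat) (p : {poly R[i]}) :=
  @Qn1 R n p /\ (forall q, @Qn1 R n q -> wint f p <= wint f q).

From HB Require Import structures.
From mathcomp Require Import all_boot all_order all_algebra.
From mathcomp Require Import all_classical all_reals all_analysis.
From mathcomp Require Import complex.
From mathcomp Require Import lra zify ring.
Import Order.TTheory GRing.Theory Num.Theory.
Import numFieldNormedType.Exports.
Local Open Scope classical_set_scope.
Local Open Scope ring_scope.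

(* Write w_n(x) = |p_n(e^{ix})|^2 f(x), so that sigma_n^2 = \int w_n.  The polynomial
   r(z) = (1 + z)/2 satisfies r(1) = 1 and |r(e^{ix})|^2 = (1 + cos x)/2, so p_n r is a
   competitor in Q_{n+1}(1) and
     \int w_n (1 - cos x) <= 2 (sigma_n^2 - sigma_{n+1}^2) = o(sigma_n^2):
   the mass of w_n concentrates where cos x = 1, i.e. at x = 0.  Continuity of g at 0 and its
   boundedness give |g x - g 0| <= eps + K (1 - cos x) on [-pi, pi]; integrating against w_n,
     |Var_{fg} - g(0) sigma_n^2| <= eps sigma_n^2 + 2 K (sigma_n^2 - sigma_{n+1}^2). *)

Section continuous_ReIm.
Context {R : realType}.
Implicit Types (u v : R -> R[i]).

Definition continuous_ReIm u :=
  continuous (fun x => complex.Re (u x)) /\ continuous (fun x => complex.Im (u x)).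

Lemma continuous_ReIm_cst (c : R[i]) : continuous_ReIm (fun=> c).
Proof. by split=> x; exact: cvg_cst. Qed.

Lemma continuous_ReIm_expi : continuous_ReIm (@expi R).
Proof. by split; [exact: continuous_cos | exact: continuous_sin]. Qed.

Lemma continuous_ReImD u v :
  continuous_ReIm u -> continuous_ReIm v -> continuous_ReIm (fun x => u x + v x).
Proof.
move=> [ur ui] [vr vi]; split=> x.
- have -> : (fun y => complex.Re (u y + v y)) = fun y => complex.Re (u y) + complex.Re (v y).
    by apply: funext => y; case: (u y) (v y) => [? ?] [? ?].
  exact: cvgD (ur x) (vr x).
- have -> : (fun y => complex.Im (u y + v y)) = fun y => complex.Im (u y) + complex.Im (v y).
    by apply: funext => y; case: (u y) (v y) => [? ?] [? ?].
  exact: cvgD (ui x) (vi x).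
Qed.

Lemma continuous_ReImM u v :
  continuous_ReIm u -> continuous_ReIm v -> continuous_ReIm (fun x => u x * v x).
Proof.
move=> [ur ui] [vr vi]; split=> x.
- have -> : (fun y => complex.Re (u y * v y)) = fun y =>
      complex.Re (u y) * complex.Re (v y) - complex.Im (u y) * complex.Im (v y).
    by apply: funext => y; case: (u y) (v y) => [? ?] [? ?].
  exact: cvgB (cvgM (ur x) (vr x)) (cvgM (ui x) (vi x)).
- have -> : (fun y => complex.Im (u y * v y)) = fun y =>
      complex.Re (u y) * complex.Im (v y) + complex.Im (u y) * complex.Re (v y).
    by apply: funext => y; case: (u y) (v y) => [? ?] [? ?].
  exact: cvgD (cvgM (ur x) (vi x)) (cvgM (ui x) (vr x)).
Qed.

Lemma continuous_ReIm_horner (q : {poly R[i]}) u :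
  continuous_ReIm u -> continuous_ReIm (fun x => q.[u x]).
Proof.
move=> cu; elim/poly_ind: q => [|q c cq].
  by under eq_fun do rewrite horner0; exact: continuous_ReIm_cst.
under eq_fun do rewrite hornerMXaddC.
apply: (@continuous_ReImD (fun x => q.[u x] * u x) (fun=> c)); last exact: continuous_ReIm_cst.
exact: continuous_ReImM.
Qed.

Lemma continuous_sqmod u : continuous_ReIm u -> continuous (fun x => sqmod (u x)).
Proof.
by move=> [ur ui] x; exact: cvgD (cvgM (ur x) (ur x)) (cvgM (ui x) (ui x)).
Qed.

End continuous_ReIm.

Lemma bounded_continuous_itv {R : realType} {h : R -> R} {a b : R} :
  continuous h -> [bounded h x | x in `[a, b]%classic].
Proof.
move=> ch.
have /compact_bounded[M [Mreal hM]] :=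
  continuous_compact (continuous_subspaceT ch) (@segment_compact _ a b).
by exists M; split => // N MN x abx; apply: (hM N MN); exists x.
Qed.

Section weighted_integral.
Context d {T : measurableType d} {R : realType} (mu : {measure set T -> \bar R}).
Variables (D : set T) (w : T -> R).
Hypotheses (mD : measurable D) (wi : mu.-integrable D (EFin \o w)).

Let integrableZ_EFin (k : R) {f : T -> R} : mu.-integrable D (EFin \o f) ->
  mu.-integrable D (EFin \o (fun x => k * f x)).
Proof.
move=> fi; have := integrableZl mD k fi.
by congr (_.-integrable _ _); apply: funext => x /=; rewrite EFinM.
Qed.

Lemma integrable_weighted {h : T -> R} :
  measurable_fun D h -> [bounded h x | x in D] ->
  mu.-integrable D (EFin \o (fun x => w x * h x)).
Proof.
move=> mh bh; have := integrableMr mD mh bh wi.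
by congr (_.-integrable _ _); apply: funext => x /=; rewrite mulrC EFinM.
Qed.

Lemma Rintegral_weighted_affine (a b : R) (h : T -> R) :
  measurable_fun D h -> [bounded h x | x in D] ->
  \int[mu]_(x in D) (w x * (a + b * h x)) =
    a * \int[mu]_(x in D) w x + b * \int[mu]_(x in D) (w x * h x).
Proof.
move=> mh bh; have wh := integrable_weighted mh bh.
rewrite -RintegralZl // -RintegralZl // -RintegralD ?integrableZ_EFin //.
by apply: eq_Rintegral => x _; rewrite mulrDr mulrCA mulrA [w x * a]mulrC.
Qed.

Hypothesis w0 : forall x, D x -> 0 <= w x.

Lemma Rintegral_weighted_dev (h u : T -> R) (c : R) :
  measurable_fun D h -> [bounded h x | x in D] ->
  measurable_fun D u -> [bounded u x | x in D] ->
  (forall x, D x -> `|h x - c| <= u x) ->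
  `|\int[mu]_(x in D) (w x * h x) - c * \int[mu]_(x in D) w x|
    <= \int[mu]_(x in D) (w x * u x).
Proof.
move=> mh bh mU bU hcu.
have wc : mu.-integrable D (EFin \o (fun x => w x * (h x - c))).
  have := integrableB mD (integrable_weighted mh bh) (integrableZ_EFin c wi).
  congr (_.-integrable _ _); apply: funext => x /=.
  by rewrite -EFinB mulrBr [c * _]mulrC.
have -> : \int[mu]_(x in D) (w x * h x) - c * \int[mu]_(x in D) w x =
    \int[mu]_(x in D) (w x * (h x - c)).
  rewrite -RintegralZl // -RintegralB //; last exact: integrableZ_EFin.
    by apply: eq_Rintegral => x _; rewrite mulrBr [c * _]mulrC.
  exact: integrable_weighted.
apply: le_trans (le_normr_Rintegral mD wc) _.
apply: le_Rintegral => //; [exact: integrable_norm | exact: integrable_weighted |].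
by move=> x Dx /=; rewrite normrM ger0_norm ?w0 // ler_wpM2l ?w0 ?hcu.
Qed.

End weighted_integral.

Section half1X.
Context {R : realType}.

Definition half1X : {poly R[i]} := (2^-1 : R)%:C%C *: ('X + 1%:P).

Lemma sqmodM (a b : R[i]) : sqmod (a * b) = sqmod a * sqmod b.
Proof. by case: a b => [a1 a2] [b1 b2]; rewrite /sqmod /=; lra. Qed.

Lemma sqmod_half1X_expi x : sqmod half1X.[expi x] = (1 + cos x) / 2.
Proof.
rewrite hornerZ hornerD hornerX hornerC /sqmod /=.
have := cos2Dsin2 x; lra.
Qed.

Lemma Qn1_mul_half1X {n : nat} {q : {poly R[i]}} : Qn1 n q -> Qn1 n.+1 (q * half1X).
Proof.
move=> [size_q q1]; split.
  have size_r : (size half1X <= 2)%N.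
    by apply: leq_trans (size_scale_leq _ _) _; rewrite size_XaddC.
  by apply: leq_trans (size_polyMleq _ _) _; lia.
rewrite hornerM q1 mul1r hornerZ hornerD hornerX hornerC.
by apply/eqP; rewrite eq_complex /=; apply/andP; split; apply/eqP; lra.
Qed.

End half1X.

Lemma cos_le_cos_norm {R : realType} (d x : R) :
  0 <= d -> d <= `|x| -> `|x| <= pi -> cos x <= cos d.
Proof.
move=> d0 dx xpi; rewrite -cos_norm.
have in_0pi (y : R) : 0 <= y -> y <= pi -> y \in `[0, pi].
  by move=> y0 ypi; rewrite in_itv /= y0.
move: dx; rewrite le_eqVlt => /predU1P[<- //|dx].
by rewrite ltW // ltr_cos ?in_0pi // (le_trans d0, le_trans _ xpi) ?ltW.
Qed.

Lemma continuous_at0_le_cos {R : realType} {g : R -> R} {M e : R} :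
  {for 0, continuous g} ->
  (forall x, x \in `[- pi, pi] -> `|g x - g 0| <= M) -> 0 < e ->
  exists2 K, 0 < K &
    forall x, x \in `[- pi, pi] -> `|g x - g 0| <= e + K * (1 - cos x).
Proof.
move=> cg gM e0.
have [d d0 near_g0] := (nbhs_ballP _ _).1 (cvgr_dist_lt _ _ cg _ e0).
have M0 : 0 <= M.
  by apply: le_trans (gM 0 _); rewrite ?subrr ?normr0 // in_itv /= oppr_le0 pi_ge0.
(* Capping by 1 keeps d' in [0, pi], where cos decreases; the K below is then chosen so
   that K (1 - cos x) >= M + 1 whenever d' <= |x|. *)
pose d' := Num.min d 1.
have d'0 : 0 < d' by rewrite lt_min d0 ltr01.
have d'pi : d' <= pi by rewrite ge_min; apply/orP; right; have := @pi_ge2 R; lra.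
have c0 : 0 < 1 - cos d'.
  by rewrite subr_gt0 -cos0 ltr_cos ?in_itv /= ?lexx ?pi_ge0 ?(ltW d'0).
exists ((M + 1) / (1 - cos d')); first by rewrite divr_gt0 // ltr_wpDl.
move=> x xD; have cx1 := cos_le1 x.
have [xd'|d'x] := ltP `|x| d'.
  have /near_g0 : ball (0 : R) d x.
    by rewrite /ball /= sub0r normrN (lt_le_trans xd') // ge_min lexx.
  rewrite distrC => /ltW gx; apply: le_trans gx _.
  by rewrite lerDl mulr_ge0 ?divr_ge0 ?subr_ge0 ?cos_le1 ?addr_ge0.
have xpi : `|x| <= pi by move: xD; rewrite in_itv /= ler_norml.
have cxd : cos x <= cos d' by apply: cos_le_cos_norm => //; exact: ltW.
have : M + 1 <= (M + 1) / (1 - cos d') * (1 - cos x).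
  by rewrite mulrAC ler_pdivlMr // ler_wpM2l //; lra.
have := gM x xD; lra.
Qed.

Lemma optimal_poly_sigma2 {R : realType} {f : R -> R} {n : nat} {q : {poly R[i]}} :
  optimal_poly f n q -> sigma2 f n = wint f q.
Proof.
move=> [Qq opt]; apply/le_anti/andP; split.
  by apply: ge_inf; [exists (wint f q) => _ [q' Qq' <-]; exact: opt | exists q].
by apply: lb_le_inf; [exists (wint f q), q | move=> _ [q' Qq' <-]; exact: opt].
Qed.

Section spectral_weight.
Context {R : realType} {f : R -> R}.
Hypotheses (f0 : forall x, x \in `[- pi, pi] -> 0 <= f x)
  (fi : (@lebesgue_measure R).-integrable `[- pi, pi] (EFin \o f)).

Local Notation D := (`[- pi, pi]%classic : set R).
Local Notation mu := (@lebesgue_measure R).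

Let mD : measurable D. Proof. exact: measurable_itv. Qed.

Let measurable_continuous {h : R -> R} : continuous h -> measurable_fun D h.
Proof.
move=> ch; apply: measurable_realfun.subspace_continuous_measurable_fun => //.
exact: continuous_subspaceT.
Qed.

Let continuous_sqmod_horner (q : {poly R[i]}) : continuous (fun x => sqmod q.[expi x]).
Proof. exact/continuous_sqmod/continuous_ReIm_horner/continuous_ReIm_expi. Qed.

Let integrable_weight (q : {poly R[i]}) :
  mu.-integrable D (EFin \o (fun x => sqmod q.[expi x] * f x)).
Proof.
have cq := continuous_sqmod_horner q.
have := @integrableMr _ _ _ mu _ mD _ _
  (measurable_continuous cq) (bounded_continuous_itv cq) fi.
by congr (_.-integrable _ _); apply: funext => x /=; rewrite EFinM.
Qed.

Let weight_ge0 (q : {poly R[i]}) x : D x -> 0 <= sqmod q.[expi x] * f x.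
Proof. by move=> Dx; rewrite mulr_ge0 ?f0 // addr_ge0 // sqr_ge0. Qed.

Let measurable_cos : measurable_fun D (@cos R).
Proof. by apply: measurable_continuous; exact: continuous_cos. Qed.

Let bounded_cos : [bounded cos x | x in D].
Proof. by apply: bounded_continuous_itv; exact: continuous_cos. Qed.

Lemma wint_mul_half1X q : wint f (q * half1X) =
  (wint f q + \int[mu]_(x in D) (sqmod q.[expi x] * f x * cos x)) / 2.
Proof.
rewrite /wint (@eq_Rintegral _ _ _ mu _
  (fun x => sqmod q.[expi x] * f x * (2^-1 + 2^-1 * cos x))); last first.
  by move=> x _; rewrite hornerM sqmodM sqmod_half1X_expi; field.
rewrite Rintegral_weighted_affine //; lra.
Qed.

Lemma wint_dev_le q {g : R -> R} {c e K : R} :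
  measurable_fun D g -> [bounded g x | x in D] ->
  (forall x, x \in `[- pi, pi] -> `|g x - c| <= e + K * (1 - cos x)) ->
  `|wint (fun x => f x * g x) q - c * wint f q|
    <= e * wint f q +
       K * (wint f q - \int[mu]_(x in D) (sqmod q.[expi x] * f x * cos x)).
Proof.
move=> mg bg gK; pose u x := e + K + (- K) * cos x.
have cu : continuous u.
  move=> x; apply: cvgD; first exact: cvg_cst.
  by apply: cvgM; [exact: cvg_cst | exact: continuous_cos].
have -> : wint (fun x => f x * g x) q =
    \int[mu]_(x in D) (sqmod q.[expi x] * f x * g x).
  by apply: eq_Rintegral => x _; rewrite mulrA.
have -> : e * wint f q +
    K * (wint f q - \int[mu]_(x in D) (sqmod q.[expi x] * f x * cos x)) =
    \int[mu]_(x in D) (sqmod q.[expi x] * f x * u x).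
  by rewrite Rintegral_weighted_affine // /wint; ring.
apply: Rintegral_weighted_dev => //.
- exact: weight_ge0.
- by apply: measurable_continuous.
- by apply: bounded_continuous_itv.
- by move=> x Dx; apply: le_trans (gK x Dx) _; rewrite /u; lra.
Qed.

Lemma sigma2_ratio_dev {n : nat} {p p' : {poly R[i]}} {g : R -> R} {e K : R} :
  optimal_poly f n p -> optimal_poly f n.+1 p' -> 0 < sigma2 f n -> 0 <= K ->
  measurable_fun D g -> [bounded g x | x in D] ->
  (forall x, x \in `[- pi, pi] -> `|g x - g 0| <= e + K * (1 - cos x)) ->
  `|wint (fun x => f x * g x) p / sigma2 f n - g 0|
    <= e + 2 * K * (1 - sigma2 f n.+1 / sigma2 f n).
Proof.
move=> opt_p opt_p' s0 K0 mg bg gK.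
set s := sigma2 f n; set s' := sigma2 f n.+1; set A := wint _ p.
set C := \int[mu]_(x in D) (sqmod p.[expi x] * f x * cos x).
have s_wint : s = wint f p := optimal_poly_sigma2 opt_p.
have s'_le : s' <= (s + C) / 2.
  rewrite /s' /C s_wint -wint_mul_half1X (optimal_poly_sigma2 opt_p').
  exact: opt_p'.2 _ (Qn1_mul_half1X opt_p.1).
have dev := wint_dev_le p mg bg gK; rewrite -/A -s_wint -/C in dev.
have -> : A / s - g 0 = (A - g 0 * s) / s by field; rewrite gt_eqF.
rewrite normrM normfV (gtr0_norm s0) ler_pdivrMr //; apply: le_trans dev _.
have -> : (e + 2 * K * (1 - s' / s)) * s = e * s + K * (2 * (s - s')).
  by field; rewrite gt_eqF.
by rewrite lerD2l ler_wpM2l //; lra.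
Qed.

(* Positivity follows from the ratio hypothesis alone, because x / 0 = 0. *)
Lemma sigma2_gt0_near (p : nat -> {poly R[i]}) :
  (forall n, optimal_poly f n (p n)) ->
  (fun n => sigma2 f n.+1 / sigma2 f n) @ \oo --> (1 : R) ->
  \forall n \near \oo, 0 < sigma2 f n.
Proof.
move=> opt ratio1; near=> n.
have s_ge0 : 0 <= sigma2 f n.
  rewrite (optimal_poly_sigma2 (opt n)); apply: Rintegral_ge0 => x; exact: weight_ge0.
rewrite lt_neqAle s_ge0 andbT eq_sym; apply/eqP => s0.
have : `|1 - sigma2 f n.+1 / sigma2 f n| < 1 by near: n; exact: cvgr_dist_lt.
by rewrite s0 invr0 mulr0 subr0 normr1 ltxx.
Unshelve. all: by end_near.
Qed.

End spectral_weight.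

Theorem lemma5p3 (R : realType) (f g : R -> R) (p : nat -> {poly R[i]}) :
  (forall x, x \in `[(- pi)%R, pi] -> 0 <= f x) ->
  (@lebesgue_measure R).-integrable `[(- pi)%R, pi] (EFin \o f) ->
  0 < Rintegral (@lebesgue_measure R) `[(- pi)%R, pi] f ->
  (fun n => sigma2 f n.+1 / sigma2 f n) @ \oo --> (1 : R) ->
  (forall n, optimal_poly f n (p n)) ->
  (forall x, x \in `[(- pi)%R, pi] -> 0 <= g x) ->
  (exists M : R, forall x, x \in `[(- pi)%R, pi] -> g x <= M) ->
  measurable_fun `[(- pi)%R, pi] g ->
  {for 0, continuous g} ->
  (fun n => wint (fun x => f x * g x) (p n) / sigma2 f n) @ \oo --> g 0.
Proof.
move=> f0 fi _ ratio1 opt g0 [M gM] mg cg.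
have D0 : (0 : R) \in `[- pi, pi] by rewrite in_itv /= oppr_le0 pi_ge0.
have bg : [bounded g x | x in `[- pi, pi]%classic].
  exists M; split => [|N MN x Dx]; first exact: num_real.
  by rewrite /= ger0_norm ?g0 // (le_trans (gM x Dx)) ?ltW.
have gM' x : x \in `[- pi, pi] -> `|g x - g 0| <= M.
  move=> Dx; have := gM x Dx; have := gM 0 D0; have := g0 x Dx; have := g0 0 D0.
  by rewrite ler_norml; lra.
apply/cvgrPdist_le => e e0.
have [K K0 gK] := continuous_at0_le_cos cg gM' (divr_gt0 e0 (ltr0n _ 2)).
have e4K : 0 < e / (4 * K) by rewrite divr_gt0 // mulr_gt0.
near=> n; rewrite distrC.
apply: le_trans (sigma2_ratio_dev f0 fi (opt n) (opt n.+1) _ (ltW K0) mg bg gK) _.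
  by near: n; exact: sigma2_gt0_near.
have : `|1 - sigma2 f n.+1 / sigma2 f n| <= e / (4 * K) by near: n; exact: cvgr_dist_le.
rewrite ler_norml => /andP[_ t_le].
have : 2 * K * (1 - sigma2 f n.+1 / sigma2 f n) <= 2 * K * (e / (4 * K)).
  by rewrite ler_wpM2l // mulr_ge0 // ltW.
have -> : 2 * K * (e / (4 * K)) = e / 2 by field; rewrite gt_eqF.
lra.
Unshelve. all: by end_near.
Qed.
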